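(* Let $K$ be a tropical aura and $R$ a positive aura with tempered growth. Then the lexicographic product $K[\times]R$ has tempered growth.
   Context: A halo is a commutative unital semiring with a partial order compatible with $+$ and $\cdot$; an aura is a halo whose semiring is a semifield; positive means $0<1$. A halo is tropical if it is not $\{0\}$, totally ordered, and $a+b=\max(a,b)$. For positive auras $R_1,R_2$, the lexicographic product $R_1[\times]R_2$ is $\{0\}\cup(R_1^\times\times R_2^\times)$ (with $0=(0,0)$, $R_i^\times=R_i\setminus\{0\}$), with componentwise operations and the lexicographic order (first coordinate most significant). A halo $R$ has tempered growth if for every non-zero $P\in\mathbb{N}[X]$ and $x\in R$, ($x^n\le P(n)$ for all $n\in\mathbb{N}$) implies $x\le1$, natural numbers being interpreted as sums of $1$. *)

From HB Require Import structures.
From mathcomp Require Import all_boot all_algebra.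
From Stdlib Require Import ClassicalEpsilon.

Set Implicit Arguments.
Unset Strict Implicit.
Unset Printing Implicit Defensive.

Record halo_ops := HaloOps {
  hcar :> Type;
  hzero : hcar;
  hone : hcar;
  hadd : hcar -> hcar -> hcar;
  hmul : hcar -> hcar -> hcar;
  hle : hcar -> hcar -> Prop
}.

Arguments hzero {_}.
Arguments hone {_}.
Arguments hadd {_}.
Arguments hmul {_}.
Arguments hle {_}.

Record halo := Halo {
  hops :> halo_ops;
  haddA : forall a b c : hops, hadd a (hadd b c) = hadd (hadd a b) c;
  haddC : forall a b : hops, hadd a b = hadd b a;
  hadd0 : forall a : hops, hadd hzero a = a;
  hmulA : forall a b c : hops, hmul a (hmul b c) = hmul (hmul a b) c;
  hmulC : forall a b : hops, hmul a b = hmul b a;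
  hmul1 : forall a : hops, hmul hone a = a;
  hmulDl : forall a b c : hops, hmul (hadd a b) c = hadd (hmul a c) (hmul b c);
  hmul0 : forall a : hops, hmul hzero a = hzero;
  hle_refl : forall a : hops, hle a a;
  hle_trans : forall a b c : hops, hle a b -> hle b c -> hle a c;
  hle_anti : forall a b : hops, hle a b -> hle b a -> a = b;
  hle_add : forall a b c : hops, hle a b -> hle (hadd a c) (hadd b c);
  hle_mul : forall a b c : hops, hle a b -> hle (hmul a c) (hmul b c)
}.

Definition hlt (R : halo_ops) (a b : R) : Prop := hle a b /\ a <> b.

(* aura = halo whose underlying semiring is a semifield *)
Definition is_semifield (R : halo) : Prop :=
  hzero <> hone :> R /\ forall x : R, x <> hzero -> exists y : R, hmul x y = hone.

Definition positive (R : halo_ops) : Prop := hlt (hzero : R) hone.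

Definition tropical (R : halo) : Prop :=
  (exists x : R, x <> hzero) /\
  (forall a b : R, hle a b \/ hle b a) /\
  (forall a b : R, (hle a b -> hadd a b = b) /\ (hle b a -> hadd a b = a)).

Definition hnat (R : halo_ops) (n : nat) : R := iter n (hadd hone) hzero.
Definition hpow (R : halo_ops) (x : R) (n : nat) : R := iter n (hmul x) hone.

Definition tempered_growth (R : halo_ops) : Prop :=
  forall (P : {poly nat}), (P != 0)%R -> forall x : R,
    (forall n : nat, hle (hpow x n) (hnat R (P.[n])%R)) -> hle x hone.

(* Lexicographic product K[x]R = {0} u (K^x * R^x) *)
Section Lex.
Variables K R : halo.

Definition lex_car : Type :=
  option {p : (K : Type) * (R : Type) | p.1 <> hzero /\ p.2 <> hzero}.

Definition lex_val (x : lex_car) : (K : Type) * (R : Type) :=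
  match x with None => (hzero, hzero) | Some p => proj1_sig p end.

(* the element of K[x]R denoted by a pair (used only on pairs that are
   either (0,0) or have both coordinates nonzero) *)
Definition lex_mk (p : (K : Type) * (R : Type)) : lex_car :=
  match excluded_middle_informative (p.1 <> hzero /\ p.2 <> hzero) with
  | left h => Some (exist _ p h)
  | right _ => None
  end.

Definition lex_add (x y : lex_car) : lex_car :=
  lex_mk (hadd (lex_val x).1 (lex_val y).1, hadd (lex_val x).2 (lex_val y).2).

Definition lex_mul (x y : lex_car) : lex_car :=
  lex_mk (hmul (lex_val x).1 (lex_val y).1, hmul (lex_val x).2 (lex_val y).2).

Definition lex_le (x y : lex_car) : Prop :=
  hlt (lex_val x).1 (lex_val y).1 \/
  ((lex_val x).1 = (lex_val y).1 /\ hle (lex_val x).2 (lex_val y).2).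

Definition lex_one : lex_car := lex_mk (hone, hone).

Definition lexprod : halo_ops :=
  @HaloOps lex_car None lex_one lex_add lex_mul lex_le.
End Lex.

From mathcomp Require Import all_boot all_algebra.
From Stdlib Require Import ClassicalEpsilon.

Set Implicit Arguments.
Unset Strict Implicit.
Unset Printing Implicit Defensive.

(* Powers and natural numbers of K[x]R are computed coordinatewise: x^n is
   (a^n, r^n) and the natural number m > 0 is (1, m), since 1 + 1 = 1 in the
   tropical K.  Nothing nonzero lies below 0 in K[x]R, so x^n <= P(n) forces
   P(n) > 0 and x^n <= (1, P(n)).  For n = 1 this gives a <= 1; if a < 1 then
   x < 1, and if a = 1 then a^n = 1 for all n, so r^n <= P(n) in R and the
   tempered growth of R yields r <= 1. *)

Lemma hpow1 (S : halo) (x : S) : hpow x 1 = x.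
Proof. by rewrite /= hmulC hmul1. Qed.

Lemma hpow1n (S : halo) n : hpow (hone : S) n = hone.
Proof. by elim: n => //= n ->; rewrite hmul1. Qed.

Lemma hmul_neq0 (S : halo) (a b : S) : is_semifield S ->
  a <> hzero -> b <> hzero -> hmul a b <> hzero.
Proof.
move=> [_ inv] a0 b0 ab0; have [y ay1] := inv a a0; apply: b0.
by rewrite -[b]hmul1 -ay1 (hmulC a) -hmulA ab0 hmulC hmul0.
Qed.

Lemma hpow_neq0 (S : halo) (x : S) n : is_semifield S ->
  x <> hzero -> hpow x n <> hzero.
Proof.
move=> sS x0; elim: n => [|n IH] /=; last exact: hmul_neq0.
by case: sS => n01 _; apply: not_eq_sym.
Qed.

Lemma hnat_ge1 (S : halo) m : positive S -> hle hone (hnat S m.+1).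
Proof.
move=> [le01 _]; elim: m => [|m IH] /=.
  by rewrite haddC hadd0; apply: hle_refl.
apply: hle_trans IH _; have := hle_add (hnat S m.+1) le01.
by rewrite hadd0.
Qed.

Lemma hnat_neq0 (S : halo) m : positive S -> hnat S m.+1 <> hzero.
Proof.
move=> pS m0; have := hnat_ge1 m pS; rewrite m0 => le10.
by case: pS => le01 []; apply: hle_anti.
Qed.

Section Tropical.
Variables (S : halo) (tS : tropical S).

Lemma tropical_addxx (a : S) : hadd a a = a.
Proof. by case: tS => _ [_ mx]; apply: (mx a a).1; apply: hle_refl. Qed.

Lemma tropical_le0 (a : S) : hle a hzero -> a = hzero.
Proof.
case: tS => _ [_ mx] le_a0; have := (mx a hzero).1 le_a0.
by rewrite haddC hadd0.
Qed.

Lemma tropical_lt01 : hzero <> hone :> S -> hlt (hzero : S) hone.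
Proof.
case: tS => _ [tot _] n01; split=> //.
by case: (tot hzero hone) => // /tropical_le0 e; case: n01.
Qed.

End Tropical.

Section LexProduct.
Variables (K R : halo) (sK : is_semifield K) (sR : is_semifield R).
Hypotheses (tK : tropical K) (pR : positive R).

Let K10 : hone <> hzero :> K. Proof. by case: sK => n01 _; apply: not_eq_sym. Qed.
Let R10 : hone <> hzero :> R. Proof. by case: sR => n01 _; apply: not_eq_sym. Qed.

Lemma lex_val_mk (p : (K : Type) * (R : Type)) :
  p = (hzero, hzero) \/ p.1 <> hzero /\ p.2 <> hzero -> lex_val (lex_mk p) = p.
Proof.
by rewrite /lex_mk; case: excluded_middle_informative => // nz [->|].
Qed.

Lemma lex_val_one : lex_val (lex_one K R) = (hone, hone).
Proof. by rewrite lex_val_mk //; right. Qed.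

Lemma lex_val_mul (x y : lex_car K R) :
  lex_val (lex_mul x y) =
  (hmul (lex_val x).1 (lex_val y).1, hmul (lex_val x).2 (lex_val y).2).
Proof.
rewrite /lex_mul lex_val_mk //.
case: x => [[[a r] /= [a0 r0]]|]; last by left; rewrite /= !hmul0.
case: y => [[[b s] /= [b0 s0]]|]; last by left; rewrite /= !(hmulC _ hzero) !hmul0.
by right; split; apply: hmul_neq0.
Qed.

Lemma lex_val_hpow (x : lexprod K R) n :
  lex_val (hpow x n) = (hpow (lex_val x).1 n, hpow (lex_val x).2 n).
Proof. by elim: n => [|n IH] /=; rewrite ?lex_val_one // lex_val_mul IH. Qed.

Lemma lex_le0 (x : lexprod K R) : hle x hzero -> x = hzero.
Proof.
case: x => [[[a r] [a0 r0]]|] // [[/= /(tropical_le0 tK)]|[]] //.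
Qed.

Lemma lex_val_hnat m :
  lex_val (hnat (lexprod K R) m.+1) = (hone, hnat R m.+1).
Proof.
elim: m => [|m IH].
  by rewrite /= /lex_add lex_val_one /= !(haddC _ hzero) !hadd0 lex_val_mk //; right.
have -> : hnat (lexprod K R) m.+2 = lex_add (lex_one K R) (hnat (lexprod K R) m.+1) by [].
rewrite /lex_add lex_val_one IH /= tropical_addxx //.
by rewrite lex_val_mk //; right; split => //; exact: hnat_neq0 m.+1 pR.
Qed.

Lemma lex_hpow_le_hnat (a : K) (r : R) (ar0 : a <> hzero /\ r <> hzero) n m :
  hle (hpow (Some (exist _ (a, r) ar0) : lexprod K R) n) (hnat _ m) ->
  hlt (hpow a n) hone \/ hpow a n = hone /\ hle (hpow r n) (hnat R m).
Proof.
case: m => [|m] le_xm.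
  have /(f_equal (fun y => (lex_val y).1)) := lex_le0 le_xm.
  by rewrite lex_val_hpow /=; move/(hpow_neq0 (n:=n) sK (proj1 ar0)).
by move: le_xm; rewrite /hle /= /lex_le lex_val_hpow lex_val_hnat.
Qed.

End LexProduct.

Theorem lemma1p34 (K R : halo) :
  is_semifield K -> tropical K ->
  is_semifield R -> positive R -> tempered_growth R ->
  tempered_growth (lexprod K R).
Proof.
move=> sK tK sR pR tR P P0 x le_xP.
rewrite /hle /= /lex_le (lex_val_one sK sR).
case: x le_xP => [[[a r] ar0]|] le_xP /=; last first.
  by left; apply: tropical_lt01 => //; case: sK.
have key n := lex_hpow_le_hnat sK sR tK pR (le_xP n).
have := key 1%N; rewrite hpow1 => -[lt_a1|[a1 _]]; first by left.
right; split=> //; apply: (tR P P0) => n.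
have [[_ an1]|[_ //]] := key n.
by case: an1; rewrite a1 hpow1n.
Qed.
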